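(* Let $\mathsf{T}$ be a rooted plane tree with $n\geq 2$ nodes and root $\mathfrak{r}$. Let $C^*\in\mathcal{M}_\mathsf{T}$ be a maximal chain with $|C^*|+f_{C^*}(\mathfrak{r})=\max_{C\in\mathcal{M}_\mathsf{T}}(|C|+f_C(\mathfrak{r}))$, and let $k=f_{C^*}(\mathfrak{r})$. Let $v_0=\mathfrak{r},v_1,\dots,v_{|C^*|-1}$ be the nodes of $C^*$ from top to bottom. For $0\leq i\leq|C^*|-2$, let $B_i=\{u\in\mathsf{T}\setminus C^*:u\leq_\mathsf{T} v_i,\ u\not\leq_\mathsf{T} v_{i+1}\}$. Define a partial order $\sqsubseteq$ on $\mathsf{T}\setminus C^*$ by: for $x\in B_i$, $y\in B_j$, if $i>j$ then $x\sqsubseteq y$; if $i=j$ then $x\sqsubseteq y$ iff $x\geq_\mathsf{T} y$. Let $v_{|C^*|},v_{|C^*|+1},\dots,v_{|\mathsf{T}|-1}$ be an ordering of $\mathsf{T}\setminus C^*$ such that $a\leq b$ whenever $v_a\sqsubseteq v_b$. Then for each integer $0\leq i<k$, the nodes $v_{|C^*|},v_{|C^*|+1},\dots,v_{|C^*|+k-i-1}$ are descendants of $v_{i+1}$.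
   Context: A rooted plane tree $\mathsf{T}$ is a finite tree with a distinguished root $\mathfrak{r}$, regarded as a poset $\leq_\mathsf{T}$ in which $v'\leq_\mathsf{T} v$ iff $v$ lies on the path from $v'$ to $\mathfrak{r}$. $\Delta_\mathsf{T}(v)=\{v':v'\leq_\mathsf{T} v\}$; a descendant of $v$ is an element of $\Delta_\mathsf{T}(v)\setminus\{v\}$; a leaf is a node with no descendants. $\mathcal{M}_\mathsf{T}$ is the set of maximal chains of $\mathsf{T}$ (paths from a leaf to the root). For $C\in\mathcal{M}_\mathsf{T}$ and $v\in C$: $\mathrm{height}_C(v)$ is the number of elements of $C$ strictly below $v$; if $v$ is not a leaf, $\mathrm{ch}_C(v)$ is the unique element of $C$ covered by $v$; $b_C(v)=|\Delta_\mathsf{T}(v)|-\mathrm{height}_C(v)-1$. The function $f_C\colon C\to\mathbb{Z}_{\geq 0}$ is defined recursively: $f_C(v)=0$ if $v$ is a leaf; otherwise, with $w=\mathrm{ch}_C(v)$, $f_C(v)=f_C(w)+1$ if $f_C(w)+1\leq b_C(w)$, and $f_C(v)=f_C(w)$ otherwise. *)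

From mathcomp Require Import all_boot.
Set Implicit Arguments. Unset Strict Implicit. Unset Printing Implicit Defensive.

(* A rooted tree on a finite node type V: root r, parent map par with
   par r = r, and every node reaches the root by iterating par.
   (The planar ordering of children plays no role in the statement.) *)
Definition is_rooted_tree (V : finType) (r : V) (par : V -> V) : Prop :=
  par r = r /\ forall v : V, exists k, iter k par v = r.

Section Tree.
Variables (V : finType) (r : V) (par : V -> V).

(* u <=_T v  iff v lies on the path from u to the root
   (path lengths in a tree on V are < #|V|). *)
Definition tle (u v : V) : bool := [exists k : 'I_#|V|.+1, iter k par u == v].

Definition Delta (v : V) : {set V} := [set u | tle u v].

Definition descendant (u v : V) : bool := tle u v && (u != v).

Definition leafb (v : V) : bool := [forall u, tle u v ==> (u == v)].

Definition is_maxchain (C : {set V}) : Prop :=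
  exists2 l : V, leafb l & C = [set v | tle l v].

Definition height (C : {set V}) (v : V) : nat :=
  #|[set u in C | descendant u v]|.

Definition ch (C : {set V}) (v : V) : option V :=
  [pick w in C | (par w == v) && (w != v)].

Definition bC (C : {set V}) (v : V) : nat := #|Delta v| - height C v - 1.

Fixpoint f_fuel (C : {set V}) (n : nat) (v : V) : nat :=
  match n with
  | 0 => 0
  | n'.+1 =>
      if leafb v then 0 else
      match ch C v with
      | None => 0
      | Some w => let x := f_fuel C n' w in
                  if x.+1 <= bC C w then x.+1 else x
      end
  end.

(* f_C(v); recursion depth is height_C(v) < #|V| *)
Definition fC (C : {set V}) (v : V) : nat := f_fuel C #|V| v.

Definition Bset (Cs : {set V}) (vv : nat -> V) (i : nat) : {set V} :=
  [set u | (u \notin Cs) && tle u (vv i) && ~~ tle u (vv i.+1)].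

Definition sqle (Cs : {set V}) (vv : nat -> V) (x y : V) : Prop :=
  exists i j, [/\ i.+2 <= #|Cs|, j.+2 <= #|Cs|, x \in Bset Cs vv i,
                  y \in Bset Cs vv j &
                  (j < i) \/ (i = j /\ tle y x)].
End Tree.

From mathcomp Require Import all_boot zify.

(* Let b(w) be the number of nodes below w that are off the chain C*; for w on
   C* this is b_{C*}(w).  Along C* = v_0 > v_1 > ..., the recursion for f gives
   f(v_j) <= f(v_{j+1}) + 1 and f(v_j) <= b(v_{j+1}), hence
   k - i <= f(v_i) <= b(v_{i+1}) for i < k.  An off-chain node below v_{i+1}
   lies in a block B_j with j > i, an off-chain node not below v_{i+1} in a
   block B_j with j <= i, so the former all precede the latter in the
   enumeration of T \ C*: the first b(v_{i+1}) >= k - i of them are below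
   v_{i+1}. *)

Section RootedTree.
Local Set Implicit Arguments.
Local Unset Strict Implicit.
Variables (V : finType) (r : V) (par : V -> V).
Hypothesis tree : is_rooted_tree r par.

Lemma iter_par_root n : iter n par r = r.
Proof. by elim: n => //= n ->; case: tree. Qed.

Lemma reach_root_lt_card u : exists2 d, d < #|V| & iter d par u = r.
Proof.
have [d0 reach_d0] := tree.2 u.
have reach : exists d, iter d par u == r by exists d0; apply/eqP.
case: (ex_minnP reach) => d /eqP reach_d min_d.
exists d => //.
pose f (i : 'I_d.+1) := iter i par u.
suff /leq_card : injective f by rewrite card_ord.
have early_root i j : i < j <= d -> iter i par u = iter j par u -> False.
  move=> /andP[ij jd] eq_ij.
  have /eqP : iter (d - j + i) par u = r by rewrite iterD eq_ij -iterD subnK.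
  by move/min_d; lia.
move=> i j eq_ij; apply/val_inj.
case: (ltngtP i j) => // [ij | ji]; exfalso.
- by apply: (early_root i j) => //; rewrite ij -ltnS ltn_ord.
- by apply: (early_root j i) => //; rewrite ji -ltnS ltn_ord.
Qed.

Lemma tleP u w : reflect (exists k, iter k par u = w) (tle par u w).
Proof.
apply: (iffP existsP) => [[k /eqP <-]|[k <-]]; first by exists k.
have [d d_lt reach_d] := reach_root_lt_card u.
case: (leqP k d) => [kd | dk].
  have k_lt : k < #|V|.+1 by lia.
  by exists (Ordinal k_lt).
have d_lt' : d < #|V|.+1 by lia.
exists (Ordinal d_lt'); apply/eqP => /=.
by rewrite -(subnK (ltnW dk)) iterD reach_d iter_par_root.
Qed.

Lemma tle_refl u : tle par u u.
Proof. by apply/tleP; exists 0. Qed.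

Lemma tle_trans : transitive (tle par).
Proof.
move=> w u x /tleP[p <-] /tleP[q <-].
by apply/tleP; exists (q + p); rewrite iterD.
Qed.

Lemma tle_root u : tle par u r.
Proof. exact/tleP/tree.2. Qed.

Lemma tle_par u : tle par u (par u).
Proof. by apply/tleP; exists 1. Qed.

Lemma Delta_sub_par u : Delta par u \subset Delta par (par u).
Proof.
by apply/subsetP => x; rewrite !inE => /tle_trans; apply; apply: tle_par.
Qed.

Lemma bC_offchain (C : {set V}) w :
  w \in C -> bC par C w = #|Delta par w :\: C|.
Proof.
move=> wC; rewrite /bC /height.
have DC : Delta par w :&: C = w |: [set u in C | descendant par u w].
  apply/setP => u; rewrite !inE /descendant.
  by case: (eqVneq u w) => [->|_]; rewrite ?tle_refl ?wC // andbT andbC.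
have := cardsID C (Delta par w).
rewrite DC cardsU1 inE /descendant eqxx !andbF /=; lia.
Qed.

Lemma f_fuel_le_offchain (C : {set V}) n w :
  f_fuel par C n w <= #|Delta par w :\: C|.
Proof.
elim: n w => [//|n IH] w /=; case: leafb => //.
rewrite /ch; case: pickP => [w' /andP[w'C /andP[/eqP <- _]] | //].
have le_b : f_fuel par C n w' <= bC par C w' by rewrite bC_offchain.
have b_le : bC par C w' <= #|Delta par (par w') :\: C|.
  by rewrite bC_offchain // subset_leq_card // setSD // Delta_sub_par.
case: ifP => [lt_b | _]; first exact: leq_trans lt_b b_le.
exact: leq_trans le_b b_le.
Qed.

Section ChainEnumeration.
Variables (Cs : {set V}) (v : nat -> V).
Hypothesis maxchain : is_maxchain par Cs.
Hypothesis v0 : v 0 = r.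
Hypothesis vC : forall i, i < #|Cs| -> v i \in Cs.
Hypothesis vpar : forall i, i.+1 < #|Cs| -> par (v i.+1) = v i.
Hypothesis vinj : forall a b, a < #|V| -> b < #|V| -> v a = v b -> a = b.

Local Notation m := #|Cs|.

Lemma chain_size_gt0 : 0 < m.
Proof.
by have [l _ ->] := maxchain; apply/card_gt0P; exists l; rewrite inE tle_refl.
Qed.

Lemma iter_par_enum d p : p + d < m -> iter d par (v (p + d)) = v p.
Proof.
elim: d => [|d IH] lt; first by rewrite addn0.
by rewrite iterSr addnS vpar ?IH //; lia.
Qed.

Lemma tle_enum p q : p <= q < m -> tle par (v q) (v p).
Proof.
move=> /andP[pq qm]; apply/tleP; exists (q - p).
by have := @iter_par_enum (q - p) p; rewrite subnKC //; apply.
Qed.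

Lemma enum_onto x : x \in Cs -> exists2 p, p < m & v p = x.
Proof.
pose S := [set v (nat_of_ord p) | p : 'I_m].
have m_le : m <= #|V| := max_card Cs.
have SCs : S \subset Cs by apply/subsetP => _ /imsetP[p _ ->]; apply: vC.
have card_S : #|S| = m.
  rewrite card_imset ?card_ord // => p q /vinj eq_pq.
  by apply/val_inj/eq_pq; apply: leq_trans m_le.
have S_eq : S = Cs by apply/eqP; rewrite eqEcard SCs card_S leqnn.
move=> xCs; have /imsetP[p _ ->] : x \in S by rewrite S_eq.
by exists p.
Qed.

Lemma enum_offchain a : m <= a < #|V| -> v a \notin Cs.
Proof.
move=> /andP[ma aV]; apply/negP => /enum_onto[p pm /vinj eq_pa].
by have := eq_pa (leq_trans pm (max_card Cs)) aV; lia.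
Qed.

Lemma offchain_not_below_last u : u \notin Cs -> ~~ tle par u (v m.-1).
Proof.
have [l leaf_l Cs_def] := maxchain.
have lCs : l \in Cs by rewrite Cs_def inE tle_refl.
have [p pm vp] := enum_onto lCs.
have last_l : v m.-1 = l.
  have : tle par (v m.-1) (v p) by apply: tle_enum; lia.
  by rewrite vp => /(implyP (forallP leaf_l _))/eqP.
move=> uCs; apply/negP; rewrite last_l => /(implyP (forallP leaf_l _))/eqP ul.
by rewrite ul lCs in uCs.
Qed.

Lemma ch_enum j :
  j < m -> ch par Cs (v j) = if j.+1 < m then Some (v j.+1) else None.
Proof.
have m_le : m <= #|V| := max_card Cs.
move=> jm; rewrite /ch.
case: pickP => [w /andP[wCs /andP[/eqP par_w w_ne]] | no_child].
  have [[|p] pm vp] := enum_onto wCs; rewrite -vp in par_w w_ne.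
    by rewrite -par_w v0 tree.1 eqxx in w_ne.
  rewrite vpar // in par_w.
  have p_lt : p < #|V| by lia.
  have j_lt : j < #|V| by lia.
  by move: vp pm; rewrite (vinj p_lt j_lt par_w) => <- ->.
case: ifP => // j1m; have := no_child (v j.+1).
rewrite vC // vpar // eqxx /=; case: eqP => // /vinj; lia.
Qed.

Lemma f_fuel_enum_bound n j d :
  j < m -> d < f_fuel par Cs n (v j) ->
  (j + d).+1 < m /\
  f_fuel par Cs n (v j) - d <= #|Delta par (v (j + d).+1) :\: Cs|.
Proof.
elim: n j d => [//|n IH] j d jm /=; case: leafb => //.
rewrite ch_enum //; case: ifP => // j1m.
rewrite bC_offchain ?vC //.
have := f_fuel_le_offchain Cs n (v j.+1).
set x := f_fuel par Cs n (v j.+1); set b := #|_ :\: Cs| => x_le.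
case: d => [|d] lt.
  by rewrite addn0 subn0; split => //; case: ifP; lia.
have d_lt : d < x by move: lt; case: ifP; lia.
have [lt_m le_S] := IH j.+1 d j1m d_lt.
rewrite addnS -addSn; split => //.
by apply: leq_trans le_S; case: ifP; lia.
Qed.

Lemma branch_index u : u \notin Cs ->
  exists j, [/\ j.+2 <= m, u \in Bset par Cs v j &
                forall p, p < m -> tle par u (v p) -> p <= j].
Proof.
move=> uCs.
pose below p := (p < m) && tle par u (v p).
have below0 : exists p, below p.
  by exists 0; rewrite /below chain_size_gt0 v0 tle_root.
have below_bounded p : below p -> p <= m by case/andP => /ltnW.
have [j /andP[jm uj] j_max] := ex_maxnP below0 below_bounded.
have j_last : j != m.-1.
  by move: (offchain_not_below_last uCs); apply: contraNneq => <-.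
exists j; split; first by lia.
  rewrite inE uCs uj /=; apply/negP => uj1.
  have : below j.+1 by rewrite /below uj1 andbT; lia.
  by move/j_max; rewrite ltnn.
by move=> p pm up; apply: j_max; rewrite /below pm.
Qed.

Lemma sqle_below_not_below i y x :
  i.+1 < m -> y \notin Cs -> tle par y (v i.+1) ->
  x \notin Cs -> ~~ tle par x (v i.+1) -> sqle par Cs v y x.
Proof.
move=> im yCs yi xCs xi.
have [jy [jy_lt y_jy jy_max]] := branch_index yCs.
have [jx [jx_lt x_jx _]] := branch_index xCs.
exists jy, jx; split => //; left.
have i_jy := jy_max _ im yi.
rewrite ltnNge; apply: contra xi => jx_i.
move: x_jx; rewrite inE => /andP[/andP[_ /tle_trans]] + _; apply.
by apply: tle_enum; lia.
Qed.

Section Ordering.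
Hypothesis vsurj : forall u : V, exists2 a, a < #|V| & v a = u.
Hypothesis sqle_ord : forall a b, m <= a < #|V| -> m <= b < #|V| ->
  sqle par Cs v (v a) (v b) -> a <= b.

Lemma card_offchain_below_le i a :
  i.+1 < m -> m <= a < #|V| -> ~~ tle par (v a) (v i.+1) ->
  #|Delta par (v i.+1) :\: Cs| <= a - m.
Proof.
move=> im /andP[ma aV] a_i.
have aCs : v a \notin Cs by apply: enum_offchain; rewrite ma.
suff sub : Delta par (v i.+1) :\: Cs \subset [seq v b | b <- iota m (a - m)].
  apply: leq_trans (subset_leq_card sub) _.
  by apply: leq_trans (card_size _) _; rewrite size_map size_iota.
apply/subsetP => y; rewrite !inE => /andP[yCs yi].
have [b bV vb] := vsurj y.
have mb : m <= b by rewrite leqNgt; apply: contra yCs => bm; rewrite -vb vC.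
have ba : b <= a.
  apply: sqle_ord; rewrite ?mb ?ma ?bV ?aV //= vb.
  exact: sqle_below_not_below im yCs yi aCs a_i.
have b_ne_a : b != a by move: a_i; apply: contraNneq => <-; rewrite vb.
by apply/mapP; exists b => //; rewrite mem_iota; lia.
Qed.

End Ordering.
End ChainEnumeration.
End RootedTree.

Theorem lemma3p1 (V : finType) (r : V) (par : V -> V)
  (Htree : is_rooted_tree r par) (Hn : 2 <= #|V|)
  (Cs : {set V}) (HCs : is_maxchain par Cs)
  (Hmax : forall C : {set V}, is_maxchain par C ->
            #|C| + fC par C r <= #|Cs| + fC par Cs r)
  (v : nat -> V)
  (Hinj : forall a b, a < #|V| -> b < #|V| -> v a = v b -> a = b)
  (Hsurj : forall u : V, exists2 a, a < #|V| & v a = u)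
  (Hv0 : v 0 = r)
  (HvC : forall i, i < #|Cs| -> v i \in Cs)
  (Hvpar : forall i, i.+1 < #|Cs| -> par (v i.+1) = v i)
  (Hord : forall a b, #|Cs| <= a < #|V| -> #|Cs| <= b < #|V| ->
            sqle par Cs v (v a) (v b) -> a <= b) :
  let k := fC par Cs r in
  forall i, i < k -> forall a, #|Cs| <= a < #|Cs| + (k - i) ->
    descendant par (v a) (v i.+1).
Proof.
move=> k i ik a; rewrite /k /fC -Hv0 in ik * => /andP[ma a_lt].
have [im offchain_ge] :=
  f_fuel_enum_bound Htree Hv0 HvC Hvpar Hinj (chain_size_gt0 Htree HCs) ik.
rewrite add0n in im offchain_ge.
have offchain_le : #|Delta par (v i.+1) :\: Cs| <= #|V| - #|Cs|.
  by rewrite -(cardsC Cs) addKn subset_leq_card // setDE subsetIr.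
have a_range : #|Cs| <= a < #|V| by rewrite ma; lia.
have aCs : v a \notin Cs := enum_offchain HvC Hinj a_range.
apply/andP; split; last by apply: contraNneq aCs => ->; apply: HvC.
apply: contraT => a_i.
have := card_offchain_below_le Htree HCs Hv0 HvC Hvpar Hinj Hsurj Hord
  im a_range a_i.
lia.
Qed.
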